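(* In System $\mathsf{F_{<:}^{K\top}}$, for any type $\Theta\vdash T$, the type $\Theta^*(T)$ is not a type variable, satisfies $\Theta\vdash T<:\Theta^*(T)$, and for every type $\Theta\vdash T'$ that is not a type variable, if $\Theta\vdash T<:T'$ then $\Theta\vdash\Theta^*(T)<:T'$.
   Context: System $\mathsf{F_{<:}^{K\top}}$: raw types $T ::= \top \mid X \mid T\to T \mid \forall^{\mathsf K}(X<:T).T \mid \forall^\top(X<:T).T$, up to $\alpha$-conversion. Contexts $\Theta$: finite sequences of $X<:T$ or $x:T$ with distinct variables, each type well-formed over the preceding part. Subtyping $\Theta\vdash S<:T$: (Var) $\Theta,X<:T,\Theta'\vdash X<:T$; (Top) $T<:\top$; (Refl); (Trans); ($\to$) from $S'<:S$, $T<:T'$ infer $S\to T<:S'\to T'$; ($\forall$-Fun) from $\Theta,X<:S\vdash T<:T'$ infer $\Theta\vdash\forall^{\mathsf K}(X<:S).T<:\forall^{\mathsf K}(X<:S).T'$; ($\forall$-Loc) from $\Theta\vdash T_0<:S_0$, $\Theta,X<:S_0\vdash S_1<:T_1$ infer $\Theta\vdash\forall^{\mathsf K}(X<:S_0).S_1<:\forall^\top(X<:T_0).T_1$; ($\forall$-Top) from $\Theta\vdash T_0<:S_0$, $\Theta,X<:\top\vdash S_1<:T_1$ infer $\Theta\vdash\forall^\top(X<:S_0).S_1<:\forall^\top(X<:T_0).T_1$. $\Theta^*(T)$ is defined by: $\Theta^*(T)=\Theta^*(S)$ if $T\equiv X$ and $\Theta\equiv\Theta',X<:S,\Theta''$;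 $\Theta^*(T)=T$ otherwise. *)

(* System F_{<:}^{K Top}, de Bruijn representation (types up to alpha-conversion). *)
From Stdlib Require Import List.

(* Raw types: Top | X | T -> T | forall^K (X<:T).T | forall^Top (X<:T).T.
   In the two binders the body (second argument) is under the new variable. *)
Inductive typ : Type :=
  | TTop : typ
  | TVar : nat -> typ
  | TArr : typ -> typ -> typ
  | TAllK : typ -> typ -> typ
  | TAllT : typ -> typ -> typ.

Fixpoint tshift (c : nat) (T : typ) : typ :=
  match T with
  | TTop => TTop
  | TVar n => if Nat.leb c n then TVar (S n) else TVar n
  | TArr A B => TArr (tshift c A) (tshift c B)
  | TAllK A B => TAllK (tshift c A) (tshift (Datatypes.S c) B)
  | TAllT A B => TAllT (tshift c A) (tshift (Datatypes.S c) B)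
  end.

Definition shift1 (T : typ) : typ := tshift 0 T.

(* A context is a list, most recent binding first; de Bruijn index n refers to
   the n-th entry (from the head).  Each entry's type lives in the context
   formed by the entries after it (the preceding part). *)
Inductive entry : Type :=
  | ETyp : typ -> entry
  | ETerm : typ -> entry.

Definition ctx := list entry.

(* Bound of type variable n in context G, expressed in G (i.e. suitably lifted);
   None if n does not denote a type variable of G. *)
Fixpoint lookup_tvar (G : ctx) (n : nat) : option typ :=
  match G, n with
  | ETyp B :: _, 0 => Some (shift1 B)
  | _ :: G', Datatypes.S m => option_map shift1 (lookup_tvar G' m)
  | _, _ => None
  end.

Inductive wf_typ : ctx -> typ -> Prop :=
  | wf_top : forall G, wf_typ G TTop
  | wf_var : forall G n U, lookup_tvar G n = Some U -> wf_typ G (TVar n)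
  | wf_arr : forall G S T, wf_typ G S -> wf_typ G T -> wf_typ G (TArr S T)
  | wf_allK : forall G S T, wf_typ G S -> wf_typ (ETyp S :: G) T -> wf_typ G (TAllK S T)
  | wf_allT : forall G S T, wf_typ G S -> wf_typ (ETyp S :: G) T -> wf_typ G (TAllT S T).

(* Well-formed contexts: each entry's type is well-formed over the preceding part
   (distinctness of variables is automatic with de Bruijn indices). *)
Inductive wf_ctx : ctx -> Prop :=
  | wfc_nil : wf_ctx nil
  | wfc_typ : forall G T, wf_ctx G -> wf_typ G T -> wf_ctx (ETyp T :: G)
  | wfc_term : forall G T, wf_ctx G -> wf_typ G T -> wf_ctx (ETerm T :: G).

Inductive sub : ctx -> typ -> typ -> Prop :=
  | S_Var : forall G n U, lookup_tvar G n = Some U -> sub G (TVar n) U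
  | S_Top : forall G T, sub G T TTop
  | S_Refl : forall G T, sub G T T
  | S_Trans : forall G S U T, sub G S U -> sub G U T -> sub G S T
  | S_Arr : forall G S S' T T', sub G S' S -> sub G T T' -> sub G (TArr S T) (TArr S' T')
  | S_AllFun : forall G S T T', sub (ETyp S :: G) T T' -> sub G (TAllK S T) (TAllK S T')
  | S_AllLoc : forall G S0 S1 T0 T1,
      sub G T0 S0 -> sub (ETyp S0 :: G) S1 T1 -> sub G (TAllK S0 S1) (TAllT T0 T1)
  | S_AllTop : forall G S0 S1 T0 T1,
      sub G T0 S0 -> sub (ETyp TTop :: G) S1 T1 -> sub G (TAllT S0 S1) (TAllT T0 T1).

(* Theta^*(T): if T = X with X <: S in Theta, then Theta^*(S) (computed in the
   prefix before X, then lifted back to Theta); otherwise T. *)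
Fixpoint star (G : ctx) (T : typ) {struct G} : typ :=
  match T with
  | TVar n =>
      match G with
      | nil => T
      | e :: G' =>
          match n with
          | 0 => match e with
                 | ETyp B => shift1 (star G' B)
                 | ETerm _ => T
                 end
          | Datatypes.S m => shift1 (star G' (TVar m))
          end
      end
  | _ => T
  end.

Definition is_tvar (T : typ) : Prop := exists n, T = TVar n.

(* Theta^* follows the chain of upper bounds X <: S, X' <: ... until it reaches
   a non-variable.  Each link is an instance of (Var), so (Trans) gives
   T <: Theta^*(T); the chain is finite because the bound of a variable lives in
   the part of the context preceding it.  Conversely, Theta^* maps every
   subtyping derivation to a derivation: (Var) relates X to its bound, which
   have the same image, and every other rule with a variable side is (Refl),
   (Top) or (Trans).  As Theta^* fixes non-variables, S <: T' with T' not a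
   variable yields Theta^*(S) <: T'. *)

From Stdlib Require Import List Lia Wf_nat.

Ltac not_tvar := let E := fresh in intros [? E]; discriminate E.

Lemma lookup_tvar_cons_S e G m :
  lookup_tvar (e :: G) (S m) = option_map shift1 (lookup_tvar G m).
Proof. destruct e; reflexivity. Qed.

Lemma shift1_TVar_inv V m : shift1 V = TVar m -> exists k, V = TVar k /\ m = S k.
Proof. destruct V; simpl; intro E; try discriminate E. injection E; eauto. Qed.

Lemma not_tvar_shift1 V : ~ is_tvar V -> ~ is_tvar (shift1 V).
Proof.
  intros HV [m Hm]. apply shift1_TVar_inv in Hm as [k [-> _]].
  apply HV. exists k. reflexivity.
Qed.

Lemma lookup_tvar_lt_length G n U : lookup_tvar G n = Some U -> n < length G.
Proof.
  revert n U; induction G as [|e G IH]; intros [|m] U E; simpl; try lia;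
    try discriminate E.
  rewrite lookup_tvar_cons_S in E.
  destruct (lookup_tvar G m) eqn:Em; try discriminate E.
  apply IH in Em. lia.
Qed.

Lemma lookup_tvar_TVar_lt G n m : lookup_tvar G n = Some (TVar m) -> n < m.
Proof.
  revert n m; induction G as [|e G IH]; intros [|n] m E; try discriminate E.
  - destruct e; try discriminate E. injection E as E.
    apply shift1_TVar_inv in E as [k [_ ->]]. lia.
  - rewrite lookup_tvar_cons_S in E.
    destruct (lookup_tvar G n) eqn:En; try discriminate E. injection E as E.
    apply shift1_TVar_inv in E as [k [-> ->]]. apply IH in En. lia.
Qed.

Lemma star_not_tvar G T : ~ is_tvar T -> star G T = T.
Proof. intro HT. destruct T, G; try reflexivity. exfalso. apply HT. eexists. reflexivity. Qed.

Lemma star_cons_shift1 e G T : star (e :: G) (shift1 T) = shift1 (star G T).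
Proof. destruct T, G; reflexivity. Qed.

Lemma star_lookup_Some G n U : lookup_tvar G n = Some U -> star G (TVar n) = star G U.
Proof.
  revert n U; induction G as [|e G IH]; intros [|m] U E; try discriminate E.
  - destruct e; try discriminate E. injection E as <-.
    rewrite star_cons_shift1. reflexivity.
  - rewrite lookup_tvar_cons_S in E.
    destruct (lookup_tvar G m) as [V|] eqn:Em; try discriminate E. injection E as <-.
    rewrite star_cons_shift1, <- (IH _ _ Em). reflexivity.
Qed.

Lemma star_lookup_None G n : lookup_tvar G n = None -> star G (TVar n) = TVar n.
Proof.
  revert n; induction G as [|e G IH]; intros [|m] E; try reflexivity.
  - destruct e; [discriminate E | reflexivity].
  - rewrite lookup_tvar_cons_S in E.
    destruct (lookup_tvar G m) eqn:Em; try discriminate E.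
    simpl. rewrite (IH _ Em). reflexivity.
Qed.

Lemma sub_tvar_star G n : sub G (TVar n) (star G (TVar n)).
Proof.
  induction n as [n IH] using (induction_ltof1 _ (fun n => length G - n)).
  destruct (lookup_tvar G n) as [U|] eqn:E;
    [|rewrite (star_lookup_None _ _ E); apply S_Refl].
  rewrite (star_lookup_Some _ _ _ E). destruct U as [|m| | |];
    try (rewrite star_not_tvar by not_tvar; exact (S_Var _ _ _ E)).
  apply S_Trans with (TVar m); [exact (S_Var _ _ _ E)|].
  apply IH. unfold ltof.
  pose proof (lookup_tvar_lt_length _ _ _ E). apply lookup_tvar_TVar_lt in E. lia.
Qed.

Lemma sub_star G T : sub G T (star G T).
Proof.
  destruct T; try (rewrite star_not_tvar by not_tvar; apply S_Refl).
  apply sub_tvar_star.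
Qed.

Lemma sub_star_star G S T : sub G S T -> sub G (star G S) (star G T).
Proof.
  induction 1 as [G n U E| | |G S U T _ IH1 _ IH2| | | |].
  5-8: rewrite !star_not_tvar by not_tvar; constructor; assumption.
  - rewrite (star_lookup_Some _ _ _ E). apply S_Refl.
  - rewrite (star_not_tvar G TTop) by not_tvar. apply S_Top.
  - apply S_Refl.
  - exact (S_Trans _ _ _ _ IH1 IH2).
Qed.

Lemma wf_tvar_cons_S e G m : wf_typ (e :: G) (TVar (S m)) -> wf_typ G (TVar m).
Proof.
  inversion 1 as [|? ? U E| | |]. rewrite lookup_tvar_cons_S in E.
  destruct (lookup_tvar G m) eqn:Em; try discriminate E. exact (wf_var _ _ _ Em).
Qed.

Lemma not_tvar_star G T : wf_ctx G -> wf_typ G T -> ~ is_tvar (star G T).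
Proof.
  intros HG; revert T; induction HG as [|G B _ IH HB|G B _ IH _]; intros T HT;
    destruct T as [|[|m]| | |]; try (simpl; not_tvar);
    inversion HT as [|? ? U E| | |]; try discriminate E;
    simpl; apply not_tvar_shift1; eauto using wf_tvar_cons_S.
Qed.

Theorem lemma6p3 (G : ctx) (T : typ) :
  wf_ctx G -> wf_typ G T ->
  ~ is_tvar (star G T) /\
  sub G T (star G T) /\
  (forall T' : typ, wf_typ G T' -> ~ is_tvar T' -> sub G T T' -> sub G (star G T) T').
Proof.
  intros HG HT. split; [|split].
  - exact (not_tvar_star G T HG HT).
  - apply sub_star.
  - intros T' _ HT' Hsub.
    rewrite <- (star_not_tvar G T' HT'). exact (sub_star_star _ _ _ Hsub).
Qed.
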